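(* Let $G$ be a graph with edge weights $w(e)\ge 1$, let $\alpha>1$ be a constant and $0<\epsilon<1$, and suppose $k=\ln\alpha/\ln(1+\epsilon)$ is a positive integer. For $j=1,\dots,k$ let $r(j)=\frac{j-1}{k}$ and let $w_{r(j)}$ be the rounded weight defined below. Let $\mathcal{M}$ be a maximum weight matching of $G$. Then there exists $j\in\{1,\dots,k\}$ such that $$w_{r(j)}(\mathcal{M})\ge(1-\epsilon)\frac{\alpha-1}{\alpha\ln\alpha}\,w(\mathcal{M}).$$
   Context: For $r\in[0,1)$, the rounded weight of an edge $e$ is $w_r(e)=\alpha^{l+r}$ where $l\in\mathbb{Z}$ is the unique integer with $w(e)\in[\alpha^{l+r},\alpha^{l+r+1})$. For an edge set $S$, $w(S)=\sum_{e\in S}w(e)$ and $w_r(S)=\sum_{e\in S}w_r(e)$. $\ln$ is the natural logarithm. *)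

From HB Require Import structures.
From mathcomp Require Import all_boot all_order all_algebra.
From mathcomp Require Import all_classical all_reals all_analysis.
Set Implicit Arguments. Unset Strict Implicit. Unset Printing Implicit Defensive.
Import Order.TTheory GRing.Theory Num.Theory.
Local Open Scope ring_scope.

Definition is_graph (T : finType) (E : {set {set T}}) : Prop :=
  forall e, e \in E -> #|e| = 2%N.

Definition is_matching (T : finType) (E M : {set {set T}}) : Prop :=
  M \subset E /\
  (forall e f, e \in M -> f \in M -> e != f -> [disjoint e & f]).

Definition wsum (R : realType) (T : finType) (w : {set T} -> R)
  (S : {set {set T}}) : R := \sum_(e in S) w e.

Definition is_max_weight_matching (R : realType) (T : finType)
  (E : {set {set T}}) (w : {set T} -> R) (M : {set {set T}}) : Prop :=
  is_matching E M /\ forall M', is_matching E M' -> wsum w M' <= wsum w M.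

(* Rounded value: alpha^(l + r) where l is the unique integer with
   x \in [alpha^(l+r), alpha^(l+r+1)), i.e. l = floor(log_alpha x - r). *)
Definition round_w (R : realType) (alpha r x : R) : R :=
  alpha `^ ((Num.floor (ln x / ln alpha - r))%:~R + r).

Definition rounded_weight (R : realType) (T : finType) (alpha r : R)
  (w : {set T} -> R) : {set T} -> R := fun e => round_w alpha r (w e).

From HB Require Import structures.
From mathcomp Require Import all_boot all_order all_algebra.
From mathcomp Require Import all_classical all_reals all_analysis.
From mathcomp Require Import ring lra.
Set Implicit Arguments. Unset Strict Implicit. Unset Printing Implicit Defensive.
Import Order.TTheory GRing.Theory Num.Theory.
Local Open Scope ring_scope.

(* Write L = ln (1 + eps), so that ln alpha = k L and the k rounding grids
   {alpha^(z + (j-1)/k)} together form the single grid {(1+eps)^p : p integer}.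
   For a weight x with n L <= ln x < (n+1) L, the k grids round x down to the
   k distinct points (1+eps)^n, ..., (1+eps)^(n-k+1), so summing over the grids
   gives at least x * sum_(i=1..k) (1+eps)^-i = x (1 - 1/alpha) / eps.  Since
   ln (1 + eps) >= eps (1 - eps), this is at least k times the required
   fraction of x; summing over the edges of M, some grid j must do at least as
   well as the average. *)

Lemma exists_ge_of_sum_ge (R : realDomainType) (k : nat) (c : R) (F : 'I_k -> R) :
  (0 < k)%N -> k%:R * c <= \sum_(i < k) F i -> exists i : 'I_k, c <= F i.
Proof.
move=> k0 hsum; apply/existsP; apply: contraTT hsum => /existsPn hlt.
rewrite -ltNge mulr_natl -[k in c *+ k]card_ord -sumr_const.
apply: ltr_sum => [|i _]; last by rewrite ltNge hlt.
by apply/hasP; exists (Ordinal k0); rewrite ?mem_index_enum.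
Qed.

Lemma geometric_sum_tail (R : comRingType) (q eps : R) (k : nat) :
  q * (1 + eps) = 1 -> eps * \sum_(i < k) q ^+ i.+1 = 1 - q ^+ k.
Proof.
move=> hq; elim: k => [|k IH]; first by rewrite big_ord0 mulr0 expr0 subrr.
have eps_q : eps * q = 1 - q by rewrite -hq; ring.
by rewrite big_ord_recr /= mulrDr IH exprS mulrA eps_q; ring.
Qed.

Lemma ln1Dx_ge (R : realType) (x : R) : -1 < x -> x / (1 + x) <= ln (1 + x).
Proof.
move=> x_gt; have x1_gt0 : 0 < 1 + x by lra.
have := expR_ge1Dx (- (x / (1 + x))).
have -> : 1 + - (x / (1 + x)) = expR (- ln (1 + x)).
  by rewrite expRN lnK ?posrE //; field; apply/lt0r_neq0.
by rewrite ler_expR lerN2.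
Qed.

Section Rounding.
Variable R : realType.

Lemma round_w_ge_pow (alpha r x : R) (z : int) :
  1 < alpha -> 0 < x -> (z%:~R + r) * ln alpha <= ln x ->
  alpha `^ (z%:~R + r) <= round_w alpha r x.
Proof.
move=> a1 x0 hz; rewrite /round_w; apply: ler_powR; first exact: ltW.
rewrite lerD2r ler_int floor_ge_int lerBrDr ler_pdivlMr //.
exact: ln_gt0.
Qed.

Variables (alpha L : R) (k : nat).
Hypotheses (k_gt0 : (0 < k)%N) (L_gt0 : 0 < L) (alpha_gt1 : 1 < alpha)
  (ln_alpha : ln alpha = k%:R * L).

Lemma round_w_ge_grid (x : R) (j : nat) (z : int) :
  0 < x -> (z%:~R * k%:R + j%:R) * L <= ln x ->
  expR ((z%:~R * k%:R + j%:R) * L) <= round_w alpha (j%:R / k%:R) x.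
Proof.
have k_neq0 : k%:R != 0 :> R by rewrite pnatr_eq0 -lt0n.
have grid : (z%:~R + j%:R / k%:R) * ln alpha = (z%:~R * k%:R + j%:R) * L.
  by rewrite ln_alpha; field.
move=> x0 hz; have := @round_w_ge_pow alpha (j%:R / k%:R) x z alpha_gt1 x0.
by rewrite grid /powR gt_eqF ?(lt_trans ltr01) // grid; apply.
Qed.

(* The congruence says that the point expR ((n - m) L) below x lies on grid j. *)
Lemma round_w_ge_shift (x : R) (n m j : nat) :
  0 < x -> n%:R * L <= ln x < n.+1%:R * L -> ((m + j) %% k = n %% k)%N ->
  x * expR (- (m.+1%:R * L)) <= round_w alpha (j%:R / k%:R) x.
Proof.
move=> x0 /andP[ln_x_ge ln_x_lt] hmod.
pose z : int := (n %/ k)%:Z - ((m + j) %/ k)%:Z.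
have hz : z%:~R * k%:R + j%:R = n%:R - m%:R :> R.
  rewrite intrB !pmulrn mulrBl -!natrM.
  have en : (n %/ k * k)%:R + (n %% k)%:R = n%:R :> R by rewrite -natrD -divn_eq.
  have emj : ((m + j) %/ k * k)%:R + ((m + j) %% k)%:R = m%:R + j%:R :> R.
    by rewrite -!natrD -divn_eq.
  by move: emj; rewrite hmod; lra.
have m_ge0 : 0 <= m%:R * L by rewrite mulr_ge0 // ltW.
have grid_le : (z%:~R * k%:R + j%:R) * L <= ln x by rewrite hz; nra.
apply: (le_trans _ (round_w_ge_grid x0 grid_le)).
rewrite -{1}(lnK x0) -expRD ler_expR hz.
by move: ln_x_lt; rewrite -addn1 -[m.+1]addn1 !natrD; nra.
Qed.

Lemma sum_round_w_ge (x : R) : 1 <= x ->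
  x * \sum_(i < k) expR (- (i.+1%:R * L)) <=
  \sum_(i < k) round_w alpha (i%:R / k%:R) x.
Proof.
case: k k_gt0 round_w_ge_shift => // k' _ shift x1.
have ln_x_ge0 : 0 <= ln x / L by rewrite divr_ge0 ?ln_ge0 // ltW.
have /andP[n_le n_lt] := truncn_itv ln_x_ge0.
set n := Num.trunc _ in n_le n_lt.
have hn : n%:R * L <= ln x < n.+1%:R * L.
  by rewrite -ler_pdivlMr // -ltr_pdivrMr // n_le n_lt.
pose c : 'I_k'.+1 := inZp n.
rewrite (reindex_inj (can_inj (subKr c))) /= mulr_sumr.
apply: ler_sum => j _; apply: shift; [lra | exact: hn |].
by have := congr1 val (subrK j c).
Qed.

End Rounding.

Lemma rounding_factor_le (R : realType) (alpha eps : R) (k : nat) :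
  1 < alpha -> 0 < eps -> eps < 1 -> ln alpha = k%:R * ln (1 + eps) ->
  k%:R * ((1 - eps) * ((alpha - 1) / (alpha * ln alpha))) <=
  \sum_(i < k) expR (- (i.+1%:R * ln (1 + eps))).
Proof.
set L := ln (1 + eps) => a1 e0 e1 ln_alpha.
have L_gt0 : 0 < L by rewrite ln_gt0 // ltrDl.
have la_gt0 : 0 < ln alpha by rewrite ln_gt0.
have q_eps : expR (- L) * (1 + eps) = 1.
  by rewrite expRN lnK ?posrE ?mulVf //; lra.
have geom : eps * \sum_(i < k) expR (- (i.+1%:R * L)) = 1 - alpha^-1.
  under eq_bigr do rewrite -mulrN expRM_natl.
  rewrite (geometric_sum_tail _ q_eps) -expRM_natl mulrN -ln_alpha expRN.
  by rewrite lnK // posrE; lra.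
have -> : \sum_(i < k) expR (- (i.+1%:R * L)) = (1 - alpha^-1) / eps.
  by rewrite -geom [eps * _]mulrC mulfK ?gt_eqF.
have -> : k%:R * ((1 - eps) * ((alpha - 1) / (alpha * ln alpha))) =
          (1 - alpha^-1) * ((1 - eps) / L).
  have k_gt0 : 0 < k%:R :> R by move: la_gt0; rewrite ln_alpha; nra.
  by rewrite ln_alpha; field; rewrite !gt_eqF //; lra.
have hL : eps * (1 - eps) <= L.
  apply: le_trans (ln1Dx_ge _); last lra.
  have eps3 : 0 <= eps * (eps * eps) by rewrite !mulr_ge0 // ltW.
  rewrite ler_pdivlMr; [nra | lra].
rewrite ler_wpM2l ?subr_ge0 ?invf_le1 //; [lra | lra |].
by rewrite ler_pdivrMr // -(ler_pM2l e0) mulrA mulfV ?gt_eqF // mul1r; nra.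
Qed.

Theorem lemma8 (R : realType) (T : finType) (E : {set {set T}})
  (w : {set T} -> R) (alpha eps : R) (k : nat) (M : {set {set T}}) :
  is_graph E ->
  (forall e, e \in E -> 1 <= w e) ->
  1 < alpha -> 0 < eps -> eps < 1 ->
  (0 < k)%N -> k%:R = ln alpha / ln (1 + eps) ->
  is_max_weight_matching E w M ->
  exists j : nat, (1 <= j <= k)%N /\
    wsum (rounded_weight alpha ((j%:R - 1) / k%:R) w) M >=
      (1 - eps) * ((alpha - 1) / (alpha * ln alpha)) * wsum w M.
Proof.
move=> _ w_ge1 a1 e0 e1 k0 hk [[sub_ME _] _].
have L_gt0 : 0 < ln (1 + eps) by rewrite ln_gt0 // ltrDl.
have ln_alpha : ln alpha = k%:R * ln (1 + eps) by rewrite hk divfK ?gt_eqF.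
have wM_ge1 e : e \in M -> 1 <= w e by move/(fintype.subsetP sub_ME)/w_ge1.
have W_ge0 : 0 <= wsum w M by apply: sumr_ge0 => e /wM_ge1; lra.
set C := (1 - eps) * _.
pose S (j : 'I_k) := wsum (rounded_weight alpha (j%:R / k%:R) w) M.
have sum_S : k%:R * (C * wsum w M) <= \sum_(j < k) S j.
  rewrite mulrA [_ * wsum _ _]mulrC.
  apply: (le_trans (ler_wpM2l W_ge0 (rounding_factor_le a1 e0 e1 ln_alpha))).
  rewrite /S /wsum /rounded_weight exchange_big /= mulr_suml.
  by apply: ler_sum => e /wM_ge1; apply: sum_round_w_ge.
have [j hj] := exists_ge_of_sum_ge k0 sum_S.
exists j.+1; split; first by rewrite /= ltn_ord.
by rewrite -addn1 natrD addrK; exact: hj.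
Qed.
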